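(* Let $A\in\mathbb{R}^{m\times n}$ with $m>n$ be a full-rank standardized matrix with no two distinct rows parallel, let $x\in\mathbb{R}^n$, and let $b=Ax$. Let $x_{k-1}$ be the $(k-1)$-st iterate of the two-subspace Kaczmarz method, and let $x_k$ be the next iterate. Then, conditionally on $x_{k-1}$, $$\mathbb{E}\|x-x_k\|_2^2\le\left(1-\frac1R\right)^2\|x-x_{k-1}\|_2^2-\frac{1}{m^2-m}\sum_{r<s}C_{r,s}^2\left(\langle x-x_{k-1},a_r\rangle^2+\langle x-x_{k-1},a_s\rangle^2\right),$$ where $\mu_{r,s}=\langle a_r,a_s\rangle$ and $C_{r,s}=\frac{|\mu_{r,s}|-\mu_{r,s}^2}{\sqrt{1-\mu_{r,s}^2}}$.
   Context: $A\in\mathbb{R}^{m\times n}$ has rows $a_1,\dots,a_m$. It is called standardized if $\|a_i\|_2=1$ for all $i$. ''No two distinct rows parallel'' means $|\langle a_r,a_s\rangle|<1$ for all $r\ne s$. Two-subspace Kaczmarz method for $(A,b)$, $b\in\mathbb{R}^m$: start from $x_0\in\mathbb{R}^n$. For $k=1,2,\dots$, choose an ordered pair $(r,s)$ of distinct indices in $\{1,\dots,m\}$ uniformly at random among the $m^2-m$ such pairs, independently of all previous choices. Then set $\mu_k=\langle a_r,a_s\rangle$, $y_k=x_{k-1}+(b_s-\langle x_{k-1},a_s\rangle)a_s$, $v_k=\frac{a_r-\mu_k a_s}{\sqrt{1-\mu_k^2}}$, $\beta_k=\frac{b_r-b_s\mu_k}{\sqrt{1-\mu_k^2}}$, and $x_k=y_k+(\beta_k-\langle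 y_k,v_k\rangle)v_k$. Scaled condition number: $R=\|A\|_F^2\|A^{-1}\|^2$, where $\|A^{-1}\|=\inf\{M: M\|Az\|_2\ge\|z\|_2\ \text{for all } z\}$, i.e. the reciprocal of the smallest singular value of $A$. *)

(* R is an arbitrary real closed field (rcfType), which
   contains the reals' algebraic content and has Num.sqrt. *)
From HB Require Import structures.
From mathcomp Require Import all_boot all_order all_algebra.
Set Implicit Arguments. Unset Strict Implicit. Unset Printing Implicit Defensive.
Import Order.TTheory GRing.Theory Num.Theory.
Local Open Scope ring_scope.

Definition dot (R : rcfType) (n : nat) (u v : 'cV[R]_n) : R :=
  \sum_(i < n) u i 0 * v i 0.

Definition norm2 (R : rcfType) (n : nat) (u : 'cV[R]_n) : R :=
  Num.sqrt (dot u u).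

Definition arow (R : rcfType) (m n : nat) (A : 'M[R]_(m, n)) (i : 'I_m)
  : 'cV[R]_n := (row i A)^T.

Definition standardized (R : rcfType) (m n : nat) (A : 'M[R]_(m, n)) : Prop :=
  forall i : 'I_m, norm2 (arow A i) = 1.

Definition no_parallel_rows (R : rcfType) (m n : nat) (A : 'M[R]_(m, n))
  : Prop :=
  forall r s : 'I_m, r != s -> `| dot (arow A r) (arow A s) | < 1.

Definition frob2 (R : rcfType) (m n : nat) (A : 'M[R]_(m, n)) : R :=
  \sum_(i < m) \sum_(j < n) A i j ^+ 2.

(* M is ||A^{-1}|| = inf { M : M ||Az||_2 >= ||z||_2 for all z }. *)
Definition is_inv_norm (R : rcfType) (m n : nat) (A : 'M[R]_(m, n)) (M : R)
  : Prop :=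
  (forall z : 'cV[R]_n, norm2 z <= M * norm2 (A *m z)) /\
  (forall M' : R, (forall z : 'cV[R]_n, norm2 z <= M' * norm2 (A *m z)) ->
     M <= M').

Definition tsk_step (R : rcfType) (m n : nat) (A : 'M[R]_(m, n))
  (b : 'cV[R]_m) (xprev : 'cV[R]_n) (r s : 'I_m) : 'cV[R]_n :=
  let mu := dot (arow A r) (arow A s) in
  let y := xprev + (b s 0 - dot xprev (arow A s)) *: arow A s in
  let v := (Num.sqrt (1 - mu ^+ 2))^-1 *: (arow A r - mu *: arow A s) in
  let beta := (b r 0 - b s 0 * mu) / Num.sqrt (1 - mu ^+ 2) in
  y + (beta - dot y v) *: v.

Definition Ccoef (R : rcfType) (m n : nat) (A : 'M[R]_(m, n)) (r s : 'I_m)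
  : R :=
  let mu := dot (arow A r) (arow A s) in
  (`|mu| - mu ^+ 2) / Num.sqrt (1 - mu ^+ 2).

From HB Require Import structures.
From mathcomp Require Import all_boot all_order all_algebra.
From mathcomp Require Import ring lra.
Import Order.TTheory GRing.Theory Num.Theory.
Set Implicit Arguments. Unset Strict Implicit. Unset Printing Implicit Defensive.
Local Open Scope ring_scope.

(* Write e = x - xprev, alpha_i = <e, a_i> and mu_rs = <a_r, a_s>.  For b = Ax
   a step with the pair (r, s) is the composition of two orthogonal
   projections of e (first onto a_s^⊥, then onto the unit direction v
   obtained by orthonormalizing a_r against a_s), so
     ||x - x_k||^2 = ||e||^2 - alpha_s^2 - (alpha_r - mu alpha_s)^2 / (1 - mu^2).
   Splitting 1/(1 - mu^2) = 1 + mu^2/(1 - mu^2) separates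
   - a plain projection part ||e||^2 - alpha_s^2 - (alpha_r - mu alpha_s)^2,
     whose average over pairs is at most (1 - 1/R)^2 ||e||^2 by the bound
     ||z||^2 <= ||A^{-1}||^2 ||Az||^2 applied to e and to e - alpha_s a_s;
   - a coupling gain mu^2 (alpha_r - mu alpha_s)^2 / (1 - mu^2), which summed
     over (r, s) and (s, r) dominates C_rs^2 (alpha_r^2 + alpha_s^2) by an
     elementary two-variable inequality. *)

Section InnerProduct.
Variables (R : rcfType) (n : nat).
Implicit Types (u v w d : 'cV[R]_n).

Lemma dotC u v : dot u v = dot v u.
Proof. by apply: eq_bigr => i _; rewrite mulrC. Qed.

Lemma dotDl u v w : dot (u + v) w = dot u w + dot v w.
Proof. by rewrite /dot -big_split; apply: eq_bigr => i _; rewrite !mxE mulrDl. Qed.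

Lemma dotZl c u w : dot (c *: u) w = c * dot u w.
Proof. by rewrite /dot mulr_sumr; apply: eq_bigr => i _; rewrite !mxE mulrA. Qed.

Lemma dotBl u v w : dot (u - v) w = dot u w - dot v w.
Proof. by rewrite dotDl -scaleN1r dotZl mulN1r. Qed.

Lemma dotZr c u w : dot w (c *: u) = c * dot w u.
Proof. by rewrite dotC dotZl dotC. Qed.

Lemma dotBr u v w : dot w (u - v) = dot w u - dot w v.
Proof. by rewrite dotC dotBl !(dotC w). Qed.

Lemma dot_ge0 u : 0 <= dot u u.
Proof. by apply: sumr_ge0 => i _; rewrite -expr2 sqr_ge0. Qed.

Lemma norm2_sq u : norm2 u ^+ 2 = dot u u.
Proof. by rewrite sqr_sqrtr // dot_ge0. Qed.

Definition proj v d : 'cV[R]_n := d - dot d v *: v.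

Lemma dot_proj v d w : dot (proj v d) w = dot d w - dot d v * dot v w.
Proof. by rewrite dotBl dotZl. Qed.

Lemma proj_sq v d : dot v v = 1 ->
  dot (proj v d) (proj v d) = dot d d - dot d v ^+ 2.
Proof. by move=> hv; rewrite dot_proj !(dotC _ (proj v d)) !dot_proj hv (dotC v d); ring. Qed.

End InnerProduct.

Lemma sub1_sqr_gt0 (R : realDomainType) (mu : R) : `|mu| < 1 -> 0 < 1 - mu ^+ 2.
Proof. by move=> mu_lt1; rewrite subr_gt0 -real_normK ?num_real // expr_lt1. Qed.

Section Rows.
Variables (R : rcfType) (m n : nat) (A : 'M[R]_(m, n)).

Lemma mulmx_dot z i : (A *m z) i 0 = dot z (arow A i).
Proof. by rewrite mxE; apply: eq_bigr => j _; rewrite !mxE mulrC. Qed.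

Lemma dot_mulmx z : dot (A *m z) (A *m z) = \sum_(i < m) dot z (arow A i) ^+ 2.
Proof. by apply: eq_bigr => i _; rewrite mulmx_dot expr2. Qed.

Lemma inv_norm_sq M z : is_inv_norm A M ->
  dot z z <= M ^+ 2 * \sum_(i < m) dot z (arow A i) ^+ 2.
Proof.
move=> [hM _]; rewrite -dot_mulmx -!norm2_sq -exprMn.
by rewrite ler_sqr ?nnegrE ?sqrtr_ge0 // (le_trans (sqrtr_ge0 _) (hM z)).
Qed.

Lemma frob2_rows : frob2 A = \sum_(i < m) dot (arow A i) (arow A i).
Proof. by apply: eq_bigr => i _; apply: eq_bigr => j _; rewrite !mxE expr2. Qed.

(* The scaled condition number is at least 1: test the bound on a basis vector. *)
Lemma scaled_cond_ge1 M : (0 < n)%N -> is_inv_norm A M -> 1 <= frob2 A * M ^+ 2.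
Proof.
move=> n_gt0 hM; pose j0 : 'I_n := Ordinal n_gt0.
have dot_delta (w : 'cV[R]_n) : dot (delta_mx j0 0) w = w j0 0.
  rewrite /dot (bigD1 j0) //= big1 ?addr0 => [|j /negbTE hj].
    by rewrite mxE !eqxx mul1r.
  by rewrite mxE hj mul0r.
have := inv_norm_sq (delta_mx j0 0) hM; rewrite dot_delta mxE !eqxx /=.
move/le_trans; apply; rewrite mulrC ler_wpM2r ?sqr_ge0 //.
rewrite /frob2; apply: ler_sum => i _; rewrite dot_delta !mxE (bigD1 j0) //= lerDl.
by rewrite sumr_ge0 // => j _; rewrite sqr_ge0.
Qed.

Lemma frob2_standardized : standardized A -> frob2 A = m%:R.
Proof.
move=> hA; rewrite frob2_rows (eq_bigr (fun _ => 1)) ?sumr_const ?card_ord //.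
by move=> i _; rewrite -norm2_sq hA expr1n.
Qed.

Lemma standardized_dim_gt0 : standardized A -> (0 < m)%N -> (0 < n)%N.
Proof.
move=> hA m_gt0; rewrite lt0n; apply/negP => /eqP n0.
have := hA (Ordinal m_gt0); rewrite /norm2 /dot big1 ?sqrtr0 => [/eqP|i _].
  by rewrite eq_sym oner_eq0.
by move: (ltn_ord i); rewrite {2}n0.
Qed.

End Rows.

(* The second search direction of a step: a_r orthonormalized against a_s. *)
Definition tsk_dir (R : rcfType) (m n : nat) (A : 'M[R]_(m, n)) (r s : 'I_m)
  : 'cV[R]_n :=
  let mu := dot (arow A r) (arow A s) in
  (Num.sqrt (1 - mu ^+ 2))^-1 *: (arow A r - mu *: arow A s).

Section TwoSubspaceStep.
Variables (R : rcfType) (m n : nat) (A : 'M[R]_(m, n)) (x xprev : 'cV[R]_n).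
Variables (r s : 'I_m).
Local Notation a_r := (arow A r).
Local Notation a_s := (arow A s).
Local Notation mu := (dot a_r a_s).
Local Notation e := (x - xprev).
Hypotheses (unit_r : dot a_r a_r = 1) (unit_s : dot a_s a_s = 1).
Hypothesis mu_lt1 : `|mu| < 1.

Let one_sub_mu2_gt0 : 0 < 1 - mu ^+ 2 := sub1_sqr_gt0 mu_lt1.

(* v is a unit vector, so the second sub-step is also an orthogonal projection. *)
Lemma tsk_dir_unit : dot (tsk_dir A r s) (tsk_dir A r s) = 1.
Proof.
rewrite /tsk_dir; set q := (X in X^-1 *: _).
have hq2 : q * q = 1 - mu ^+ 2 by rewrite -expr2 sqr_sqrtr // ltW.
have q_neq0 : q != 0 by rewrite sqrtr_eq0 -ltNge one_sub_mu2_gt0.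
rewrite !(dotZl, dotZr, dotBl, dotBr) unit_r unit_s (dotC a_s a_r).
transitivity (q^-1 * q^-1 * (1 - mu ^+ 2)); first by ring.
by rewrite -hq2; field.
Qed.

Lemma tsk_step_error :
  x - tsk_step A (A *m x) xprev r s = proj (tsk_dir A r s) (proj a_s e).
Proof.
rewrite /tsk_step; cbv zeta; fold (tsk_dir A r s); set v := tsk_dir A r s.
rewrite !mulmx_dot; set y := xprev + _.
have x_sub_y : x - y = proj a_s e.
  by rewrite /y /proj dotBl opprD addrA.
have -> : (dot x a_r - dot x a_s * mu) / Num.sqrt (1 - mu ^+ 2) = dot x v.
  by rewrite /v /tsk_dir dotZr dotBr dotZr mulrC (mulrC (dot x a_s)).
by rewrite opprD addrA -dotBl x_sub_y.
Qed.

(* Error after one step: the first projection removes <e,a_s>^2, the second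
   removes <e,a_r - mu a_s>^2 / (1 - mu^2). *)
Lemma tsk_step_sq_error :
  norm2 (x - tsk_step A (A *m x) xprev r s) ^+ 2 =
  dot e e - dot e a_s ^+ 2 - (dot e a_r - mu * dot e a_s) ^+ 2 / (1 - mu ^+ 2).
Proof.
rewrite norm2_sq tsk_step_error proj_sq ?tsk_dir_unit // proj_sq //; congr (_ - _).
rewrite dot_proj /tsk_dir !(dotZr, dotBr) unit_s (dotC a_s a_r) mulr1 subrr.
rewrite !mulr0 subr0 exprMn exprVn sqr_sqrtr ?(ltW one_sub_mu2_gt0) //.
exact: mulrC.
Qed.

Lemma tsk_step_split :
  norm2 (x - tsk_step A (A *m x) xprev r s) ^+ 2 =
  (dot e e - dot e a_s ^+ 2 - (dot e a_r - mu * dot e a_s) ^+ 2)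
  - mu ^+ 2 * (dot e a_r - mu * dot e a_s) ^+ 2 / (1 - mu ^+ 2).
Proof.
rewrite tsk_step_sq_error; have := one_sub_mu2_gt0.
by move: mu (dot e a_r - _) => c g c_lt1; field; rewrite gt_eqF.
Qed.

End TwoSubspaceStep.

Section OffDiagonalSums.
Variables (V : nmodType) (m : nat).
Implicit Type F : 'I_m -> 'I_m -> V.

Lemma sum_offdiag_pairs F :
  \sum_(r < m) \sum_(s < m | s != r) F r s =
  \sum_(r < m) \sum_(s < m | (r < s)%N) (F r s + F s r).
Proof.
have split_neq r : \sum_(s < m | s != r) F r s =
    \sum_(s < m | (r < s)%N) F r s + \sum_(s < m | (s < r)%N) F r s.
  rewrite (bigID (fun s : 'I_m => (r < s)%N)) /=.
  by congr (_ + _); apply: eq_bigl => s; rewrite -val_eqE /=; case: ltngtP.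
rewrite (eq_bigr _ (fun r _ => split_neq r)) big_split /=.
under [RHS]eq_bigr do rewrite big_split; rewrite [RHS]big_split /=; congr (_ + _).
by rewrite (exchange_big_dep xpredT) //=; apply: eq_bigr => r _; apply: eq_bigl.
Qed.

Lemma sum_offdiag_swap F :
  \sum_(r < m) \sum_(s < m | s != r) F r s =
  \sum_(r < m) \sum_(s < m | s != r) F s r.
Proof.
by rewrite !sum_offdiag_pairs; apply: eq_bigr => r _; apply: eq_bigr => s _; rewrite addrC.
Qed.

Lemma sum_const_neq (s : 'I_m) (c : V) : \sum_(r < m | r != s) c = c *+ m.-1.
Proof. by rewrite (eq_bigl (mem (predC1 s))) // sumr_const cardC1 card_ord. Qed.

End OffDiagonalSums.

(* The coupling gain of a pair: since
     mu^2 ((p - mu q)^2 + (q - mu p)^2) - (|mu| - mu^2)^2 (p^2 + q^2)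
       = 2 |mu|^3 (p - sgn(mu) q)^2,
   the left side is nonnegative. *)
Lemma coupling_ineq (R : realFieldType) (mu p q : R) :
  (`|mu| - mu ^+ 2) ^+ 2 * (p ^+ 2 + q ^+ 2) <=
  mu ^+ 2 * ((p - mu * q) ^+ 2 + (q - mu * p) ^+ 2).
Proof.
have [mu_ge0|mu_lt0] := leP 0 mu.
  rewrite ger0_norm //.
  have := mulr_ge0 (sqr_ge0 mu) (mulr_ge0 mu_ge0 (sqr_ge0 (p - q))); lra.
rewrite ltr0_norm //.
have nmu_ge0 : 0 <= - mu by rewrite oppr_ge0 ltW.
have := mulr_ge0 (sqr_ge0 mu) (mulr_ge0 nmu_ge0 (sqr_ge0 (p + q))); lra.
Qed.

Lemma coupling_gain (R : rcfType) (mu p q : R) : `|mu| < 1 ->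
  ((`|mu| - mu ^+ 2) / Num.sqrt (1 - mu ^+ 2)) ^+ 2 * (p ^+ 2 + q ^+ 2) <=
  mu ^+ 2 * (p - mu * q) ^+ 2 / (1 - mu ^+ 2)
  + mu ^+ 2 * (q - mu * p) ^+ 2 / (1 - mu ^+ 2).
Proof.
move=> /sub1_sqr_gt0 d_gt0.
rewrite expr_div_n sqr_sqrtr ?(ltW d_gt0) // -mulrDl -mulrDr mulrAC.
by rewrite ler_pM2r ?invr_gt0 // coupling_ineq.
Qed.

(* Averaged estimates for a standardized A, with rho = 1/R the inverse scaled
   condition number and e = x - xprev the current error. *)
Section ErrorDecay.
Variables (R : rcfType) (m n : nat) (A : 'M[R]_(m, n)) (M : R) (e : 'cV[R]_n).
Hypotheses (A_std : standardized A) (A_inv : is_inv_norm A M).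
Hypothesis m_gt0 : (0 < m)%N.
Local Notation alpha i := (dot e (arow A i)).
Local Notation mu r s := (dot (arow A r) (arow A s)).
Local Notation rho := (frob2 A * M ^+ 2)^-1.

Lemma unit_rows i : dot (arow A i) (arow A i) = 1.
Proof. by rewrite -norm2_sq A_std expr1n. Qed.

Lemma cond_ge1 : 1 <= frob2 A * M ^+ 2.
Proof. exact: scaled_cond_ge1 (standardized_dim_gt0 A_std m_gt0) A_inv. Qed.

Lemma rho_gt0 : 0 < rho.
Proof. by rewrite invr_gt0 (lt_le_trans ltr01 cond_ge1). Qed.

Lemma rho_le1 : rho <= 1.
Proof. by rewrite invf_le1 ?cond_ge1 // (lt_le_trans ltr01 cond_ge1). Qed.

(* Every z loses at least the fraction m * rho = 1/M^2 of its energy under A. *)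
Lemma energy_lower z : rho * m%:R * dot z z <= \sum_(i < m) dot z (arow A i) ^+ 2.
Proof.
have m_neq0 : m%:R != 0 :> R by rewrite pnatr_eq0 -lt0n.
have M2_gt0 : 0 < M ^+ 2.
  have := rho_gt0; rewrite invr_gt0 (frob2_standardized A_std).
  by rewrite pmulr_rgt0 // ltr0n.
have -> : rho * m%:R = (M ^+ 2)^-1.
  by rewrite (frob2_standardized A_std) invfM mulrAC mulVf ?mul1r.
by rewrite ler_pdivrMl // inv_norm_sq.
Qed.

Lemma natr_pred : m.-1%:R = m%:R - 1 :> R.
Proof. by rewrite -subn1 natrB. Qed.

Lemma row_residual s :
  \sum_(r < m | r != s) (dot e e - alpha s ^+ 2 - (alpha r - mu r s * alpha s) ^+ 2)
  <= (m%:R - 1) * (1 - rho) * (dot e e - alpha s ^+ 2).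
Proof.
set d := proj (arow A s) e.
have Ed : dot d d = dot e e - alpha s ^+ 2 := proj_sq e (unit_rows s).
have d_row r : dot d (arow A r) = alpha r - mu r s * alpha s.
  by rewrite dot_proj (dotC (arow A s)) mulrC.
have d_s : dot d (arow A s) = 0 by rewrite d_row unit_rows mul1r subrr.
have lost : rho * m%:R * dot d d <=
    \sum_(r < m | r != s) (alpha r - mu r s * alpha s) ^+ 2.
  apply: (le_trans (energy_lower d)); rewrite (bigD1 s) //= d_s expr0n add0r.
  by under eq_bigr do rewrite d_row.
rewrite sumrB sum_const_neq -[_ *+ m.-1]mulr_natl natr_pred -Ed.
have := rho_gt0; have := dot_ge0 d; have : (1 <= m%:R :> R) by rewrite ler1n.
nra.
Qed.

Lemma residual_total :
  \sum_(r < m) \sum_(s < m | s != r)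
      (dot e e - alpha s ^+ 2 - (alpha r - mu r s * alpha s) ^+ 2)
  <= m%:R * (m%:R - 1) * ((1 - rho) ^+ 2 * dot e e).
Proof.
rewrite sum_offdiag_swap; apply: le_trans (ler_sum _ (fun s _ => row_residual s)) _.
rewrite -mulr_sumr sumrB sumr_const card_ord -mulr_natl.
have factor_ge0 : 0 <= (m%:R - 1) * (1 - rho).
  by rewrite mulr_ge0 // subr_ge0 ?ler1n ?rho_le1.
have energy := energy_lower e; rewrite -subr_ge0 in energy.
have := mulr_ge0 factor_ge0 energy; nra.
Qed.

End ErrorDecay.

Lemma coupling_total (R : rcfType) (m n : nat) (A : 'M[R]_(m, n)) (e : 'cV[R]_n) :
  no_parallel_rows A ->
  \sum_(r < m) \sum_(s < m | (r < s)%N)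
     Ccoef A r s ^+ 2 * (dot e (arow A r) ^+ 2 + dot e (arow A s) ^+ 2)
  <= \sum_(r < m) \sum_(s < m | s != r)
     dot (arow A r) (arow A s) ^+ 2
     * (dot e (arow A r) - dot (arow A r) (arow A s) * dot e (arow A s)) ^+ 2
     / (1 - dot (arow A r) (arow A s) ^+ 2).
Proof.
move=> A_np; rewrite sum_offdiag_pairs; apply: ler_sum => r _.
apply: ler_sum => s r_lt_s; rewrite (dotC (arow A s)) /Ccoef.
by apply: coupling_gain; apply: A_np; rewrite -val_eqE /= ltn_eqF.
Qed.

Theorem lemma2 (R : rcfType) (m n : nat) (A : 'M[R]_(m, n))
  (x xprev : 'cV[R]_n) (Minv : R) :
  (n < m)%N ->
  \rank A = n ->
  standardized A ->
  no_parallel_rows A ->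
  is_inv_norm A Minv ->
  let b := A *m x in
  let Rc := frob2 A * Minv ^+ 2 in
  ((m ^ 2 - m)%N%:R)^-1 *
    \sum_(r < m) \sum_(s < m | s != r) norm2 (x - tsk_step A b xprev r s) ^+ 2
  <= (1 - Rc^-1) ^+ 2 * norm2 (x - xprev) ^+ 2
     - ((m ^ 2 - m)%N%:R)^-1 *
       \sum_(r < m) \sum_(s < m | (r < s)%N)
          Ccoef A r s ^+ 2 *
          (dot (x - xprev) (arow A r) ^+ 2 + dot (x - xprev) (arow A s) ^+ 2).
Proof.
move=> m_gt_n _ A_std A_np A_inv; cbv zeta.
have m_gt0 : (0 < m)%N := leq_ltn_trans (leq0n n) m_gt_n.
have m_gt1 : (1 < m)%N := leq_ltn_trans (standardized_dim_gt0 A_std m_gt0) m_gt_n.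
have pairs_eq : (m ^ 2 - m)%N%:R = m%:R * (m%:R - 1) :> R.
  by rewrite natrB ?leq_pmull // natrX; ring.
have pairs_gt0 : 0 < m%:R * (m%:R - 1) :> R.
  by rewrite mulr_gt0 ?ltr0n // subr_gt0 ltr1n.
have mu_lt1 r s : s != r -> `|dot (arow A r) (arow A s)| < 1.
  by rewrite eq_sym; apply: A_np.
rewrite (eq_bigr _ (fun r _ => eq_bigr _ (fun s s_neq_r =>
  tsk_step_split x xprev (unit_rows A_std r) (unit_rows A_std s) (mu_lt1 r s s_neq_r)))).
under eq_bigr do rewrite sumrB; rewrite sumrB pairs_eq norm2_sq mulrBr lerB //.
  by rewrite ler_pdivrMl // residual_total.
by apply: ler_wpM2l; [rewrite invr_ge0 ltW | exact: coupling_total].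
Qed.
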